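(* Let $m>1$ and let $\mathcal{H}=\sum_{j=1}^r\lambda_j[u_j^1,\ldots,u_j^m]_{\otimes h}$ with $0\neq\lambda_j\in\mathbb{R}$ and $u_j^i\in\mathbb{C}^{n_i}$. For each $i=1,\ldots,m$ let $U_i=\{u_1^i,\ldots,u_r^i\}$. If $k_{U_1}+\cdots+k_{U_m}\ge r+m$, then $\operatorname{hrank}(\mathcal{H})=r$ and the Hermitian rank decomposition of $\mathcal{H}$ is essentially unique, i.e. unique up to permutation of the terms and scaling of the decomposing vectors.
   Context: For $v_i\in\mathbb{C}^{n_i}$, $[v_1,\ldots,v_m]_{\otimes h}:=v_1\otimes\cdots\otimes v_m\otimes\overline{v_1}\otimes\cdots\otimes\overline{v_m}$. For a Hermitian tensor $\mathcal{H}$ (i.e. $\mathcal{H}\in\mathbb{C}^{n_1\times\cdots\times n_m\times n_1\times\cdots\times n_m}$ with $\mathcal{H}_{i_1\ldots i_m j_1\ldots j_m}=\overline{\mathcal{H}_{j_1\ldots j_m i_1\ldots i_m}}$), $\operatorname{hrank}(\mathcal{H})$ is the smallest $r$ with $\mathcal{H}=\sum_{i=1}^r\lambda_i[u_i^1,\ldots,u_i^m]_{\otimes h}$, $\lambda_i\in\mathbb{R}$, $u_i^j\in\mathbb{C}^{n_j}$; such a decomposition of minimal length is a Hermitian rank decomposition. For a finite set (list) $S$ of vectors, its Kruskal rank $k_S$ is the largest $k$ such that every subset of $k$ vectors of $S$ is linearly independent. *)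

From HB Require Import structures.
From mathcomp Require Import all_boot all_order all_algebra.
From mathcomp Require Import complex.
From mathcomp Require Import reals.
Set Implicit Arguments. Unset Strict Implicit. Unset Printing Implicit Defensive.
Import Order.TTheory GRing.Theory Num.Theory.
Local Open Scope ring_scope.
Local Open Scope complex_scope.

Section Hermitian.
Variables (R : realType) (m : nat) (n : 'I_m -> nat).
Local Notation C := (R[i]).

Definition mindex := forall k : 'I_m, 'I_(n k).

(* tensors in C^{n_1 x ... x n_m x n_1 x ... x n_m}: H a b = H_{a_1..a_m b_1..b_m} *)
Definition htensor := mindex -> mindex -> C.

Definition vtuple := forall k : 'I_m, 'rV[C]_(n k).

Definition hprod (v : vtuple) : htensor :=
  fun a b => \prod_(k < m) (v k 0 (a k) * Num.conj (v k 0 (b k))).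

Definition hsum (r : nat) (lam : 'I_r -> R) (u : 'I_r -> vtuple) : htensor :=
  fun a b => \sum_(j < r) (lam j)%:C * hprod (u j) a b.

Definition hermitian (H : htensor) : Prop :=
  forall a b, H a b = Num.conj (H b a).

Definition hdecomp (H : htensor) (r : nat) : Prop :=
  exists (lam : 'I_r -> R) (u : 'I_r -> vtuple), H = hsum lam u.

Definition hrank_is (H : htensor) (r : nat) : Prop :=
  hdecomp H r /\ forall r', hdecomp H r' -> (r <= r')%N.

End Hermitian.

Definition kruskal_rank (F : fieldType) (p r : nat) (v : 'I_r -> 'rV[F]_p) : nat :=
  \max_(k < r.+1 | [forall A : {set 'I_r}, (#|A| == k) ==> free [seq v j | j in A]]) k.

From HB Require Import structures.
From mathcomp Require Import all_boot all_order all_algebra.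
From mathcomp Require Import fingroup perm complex.
From mathcomp Require Import reals.
From mathcomp Require Import zify ring.
Import Order.TTheory GRing.Theory Num.Theory.
Local Open Scope ring_scope.
Local Open Scope complex_scope.
Set Implicit Arguments. Unset Strict Implicit. Unset Printing Implicit Defensive.

(* Flatten tensors into row vectors indexed by multi-indices; the Hermitian tensor sum_j
   lam_j [u_j^1,...,u_j^m]_h becomes the matrix conj(V)^T diag(lam) V whose rows V_j are
   the flattened rank-one tensors u_j^1 (x) ... (x) u_j^m. Everything rests on Kruskal's
   lemma: if sum_j d_j f_j^T g_j has rank at most rho, the families f and g have Kruskal
   ranks ka, kb > rho, and there are fewer than ka + kb - rho terms, then at most rho of
   the d_j are nonzero. With rho = 0 and induction on the number of factors, the Kruskal
   rank of the V_j is at least 1 + sum_k (k_{U_k} - 1) >= r + 1, so V has full row rank and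
   the matrix of the tensor has rank r, which bounds every decomposition length from below.
   For a second decomposition of length r with matrix W, counting ranks gives rowspace W =
   rowspace V; flattening along a single factor, the case rho = 1 shows that a rank-one
   tensor in the span of the V_j is a multiple of one V_j. So W = A V with A a scaled
   matching, and since X |-> conj(V)^T X V is injective, A is a scaled permutation matching
   the coefficients. *)

Lemma exists_subset_card (I : finType) (A : {set I}) k :
  (k <= #|A|)%N -> exists2 B : {set I}, B \subset A & #|B| = k.
Proof.
case/card_geqP => s [s_uniq s_size sA]; exists [set x in s].
  by apply/subsetP => x; rewrite inE => /sA.
by rewrite cardsE (card_uniqP s_uniq).
Qed.

Lemma sum_predn (I : finType) (A : {pred I}) (f : I -> nat) :
  (forall i, 0 < f i)%N -> \sum_(i in A) f i = (\sum_(i in A) (f i).-1 + #|A|)%N.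
Proof.
by move=> f_gt0; rewrite -sum1_card -big_split; apply: eq_bigr => i _ /=; rewrite addn1 prednK.
Qed.

Section FreeOn.
Variables (F : fieldType) (r N : nat) (f : 'I_r -> 'rV[F]_N).

Definition free_on (T : {set 'I_r}) :=
  forall d : 'I_r -> F, \sum_(j in T) d j *: f j = 0 -> {in T, forall j, d j = 0}.

Definition kruskal_ge k := forall T : {set 'I_r}, (#|T| <= k)%N -> free_on T.

Lemma free_onS (T T' : {set 'I_r}) : T' \subset T -> free_on T -> free_on T'.
Proof.
move=> sT'T freeT d dT'0 j jT'.
have := freeT (fun j => if j \in T' then d j else 0) _ j (subsetP sT'T j jT').
rewrite jT'; apply; rewrite -[RHS]dT'0 (big_setID T') /= (setIidPr sT'T).
rewrite [X in _ + X]big1 ?addr0 => [|i]; first by apply: eq_bigr => i ->.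
by rewrite inE => /andP[/negbTE -> _]; rewrite scale0r.
Qed.

Lemma kruskal_geW k k' : (k' <= k)%N -> kruskal_ge k -> kruskal_ge k'.
Proof. by move=> le_k'k fk T leTk'; apply: fk; apply: leq_trans le_k'k. Qed.

Lemma free_on_rank_le m (M : 'M_(m, N)) (S : {set 'I_r}) :
  free_on S -> {in S, forall j, (f j <= M)%MS} -> (#|S| <= \rank M)%N.
Proof.
move=> freeS fM; pose B := \matrix_(i < #|S|) f (enum_val i).
have freeB : row_free B.
  apply/inj_row_free => v vB0; apply/rowP => i; rewrite mxE.
  pose d j := v 0 (enum_rank_in (enum_valP i) j).
  have := freeS d _ (enum_val i) (enum_valP i); rewrite /d enum_valK_in; apply.
  rewrite (big_enum_val (fun j => d j *: f j)) -[RHS]vB0 mulmx_sum_row.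
  by apply: eq_bigr => i' _; rewrite /d enum_valK_in rowK.
rewrite -(eqP freeB); apply: mxrankS; apply/row_subP => i.
by rewrite rowK fM ?enum_valP.
Qed.

Lemma free_on_row_free : free_on setT -> row_free (\matrix_j f j).
Proof.
move=> freeT; rewrite /row_free eqn_leq rank_leq_row /=.
rewrite -[X in (X <= _)%N]card_ord -cardsT free_on_rank_le // => j _.
by rewrite -[f j](rowK f) row_sub.
Qed.

Lemma free_free_on (A : {set 'I_r}) : free [seq f j | j in A] -> free_on A.
Proof.
move=> freeA d sum0 j jA.
have j_lt : (index j (enum A) < size [seq f j | j in A])%N.
  by rewrite size_map index_mem mem_enum.
have := (@freeP _ _ _ (in_tuple [seq f j | j in A]) freeA)
  (fun i => d (nth j (enum A) i)) _ (Ordinal j_lt).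
rewrite /= nth_index ?mem_enum //; apply.
rewrite -[RHS]sum0 -[in RHS]big_enum /= [in RHS](big_nth j) [in RHS]big_mkord.
by rewrite size_map; apply: eq_bigr => i _; rewrite (nth_map j).
Qed.

Lemma kruskal_rank_le : (kruskal_rank f <= r)%N.
Proof. by apply/bigmax_leqP => i _; rewrite -ltnS. Qed.

Lemma kruskal_ge_rank : kruskal_ge (kruskal_rank f).
Proof.
rewrite /kruskal_rank.
set P := (fun k : 'I_r.+1 =>
  [forall A : {set 'I_r}, (#|A| == k) ==> free [seq f j | j in A]]).
have P0 : (0 < #|P|)%N.
  apply/card_gt0P; exists ord0; apply/forallP => A.
  apply/implyP => /eqP /cards0_eq ->.
  by rewrite /image_mem enum_set0 nil_free.
have [k Pk ->] := @eq_bigmax_cond _ P (fun k : 'I_r.+1 => nat_of_ord k) P0.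
move=> T leTk.
have [B sBT cardB] : exists2 B : {set 'I_r}, B \subset ~: T & #|B| = (k - #|T|)%N.
  by apply: exists_subset_card; have := cardsC T; rewrite card_ord; have := ltn_ord k; lia.
apply: (@free_onS (T :|: B)); first exact: subsetUl.
apply: free_free_on; move/forallP: Pk => /(_ (T :|: B)) /implyP; apply.
have /eqP TB0 : T :&: B == set0 by rewrite setI_eq0 disjoint_sym disjoints_subset.
by rewrite cardsU TB0 cards0 cardB subn0; apply/eqP; lia.
Qed.


Lemma kruskal_rank_gt0 : (0 < r)%N -> (forall j, f j != 0) -> (0 < kruskal_rank f)%N.
Proof.
move=> r_gt0 f_neq0; have one_lt : (1 < r.+1)%N by [].
pose F_ k : nat := nat_of_ord (k : 'I_r.+1).
apply: (leq_trans _ (leq_bigmax_cond (F := F_) (Ordinal one_lt) _)) => //.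
apply/forallP => A; apply/implyP => /cards1P [j ->].
by rewrite /image_mem enum_set1 /= seq1_free.
Qed.

Lemma rank_sumsmx_le (T : {set 'I_r}) : (\rank (\sum_(j in T) <<f j>>)%MS <= #|T|)%N.
Proof.
apply: leq_trans (mxrank_sum_leqif _).1 _; rewrite -sum1_card.
by apply: leq_sum => j _; rewrite /= genmxE rank_leq_row.
Qed.

Lemma sub_adds_sumsmx m (P : 'M_(m, N)) (T : {set 'I_r}) j :
  j \in T -> (f j <= P + \sum_(j in T) <<f j>>)%MS.
Proof.
by move=> jT; apply: submx_trans (addsmxSr P _); apply: (sumsmx_sup j); rewrite ?genmxE.
Qed.

Lemma free_on_not_sub rho (P : 'M_(rho, N)) (S T : {set 'I_r}) :
  free_on (S :|: T) -> [disjoint S & T] -> #|S| = rho.+1 ->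
  exists2 j0, j0 \in S & ~~ (f j0 <= P + \sum_(j in T) <<f j>>)%MS.
Proof.
move=> freeST disST cardS; apply/exists_inP; rewrite -negb_forall_in.
apply/negP => /forall_inP fS_sub.
have fM : {in S :|: T, forall j, (f j <= P + \sum_(j in T) <<f j>>)%MS}.
  by move=> j; rewrite inE => /orP[/fS_sub // | /sub_adds_sumsmx].
have := free_on_rank_le freeST fM; have /eqP STI0 : S :&: T == set0 by rewrite setI_eq0.
rewrite cardsU STI0 cards0 cardS subn0.
have := (mxrank_adds_leqif P (\sum_(j in T) <<f j>>)%MS).1.
have := rank_leq_row P; have := rank_sumsmx_le T; lia.
Qed.

End FreeOn.

Section OuterSum.
Variables (F : fieldType) (r N1 N2 : nat).
Variables (f : 'I_r -> 'rV[F]_N1) (g : 'I_r -> 'rV[F]_N2).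

(* A cokernel of [M] kills [P] and every [f j] in [M], leaving a relation among the
   remaining [g j] whose coefficient at [j0] is nonzero. *)
Lemma outer_sum_not_free rho (P : 'M_(rho, N1)) (Q : 'M_(rho, N2)) m (M : 'M_(m, N1))
    (d : 'I_r -> F) (T : {set 'I_r}) j0 :
  \sum_(j in T) d j *: ((f j)^T *m g j) = P^T *m Q -> (P <= M)%MS ->
  j0 \in T -> d j0 != 0 -> ~~ (f j0 <= M)%MS ->
  ~ free_on g [set j in T | ~~ (f j <= M)%MS].
Proof.
move=> sum_eq PM j0T dj0 fj0M freeg; set Z := cokermx M.
have fZ0 j : (f j <= M)%MS -> f j *m Z = 0 by rewrite submxE => /eqP.
have /rV0Pn [e fj0Ze] : f j0 *m Z != 0 by rewrite -submxE.
have relT : \sum_(j in T) (d j * (f j *m Z) 0 e) *: g j = 0.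
  have PZ0 : P *m Z = 0 by apply/eqP; rewrite -submxE.
  have rowe0 : row e (Z^T *m \sum_(j in T) d j *: ((f j)^T *m g j)) = 0.
    by rewrite sum_eq mulmxA -trmx_mul PZ0 trmx0 mul0mx row0.
  rewrite -[RHS]rowe0; apply/rowP => z; rewrite mulmx_sumr !mxE !summxE.
  apply: eq_bigr => j _.
  by rewrite -scalemxAr (mulmxA Z^T) -trmx_mul !mxE big_ord1 !mxE mulrA.
suff sum0 : \sum_(j in [set j in T | ~~ (f j <= M)%MS]) (d j * (f j *m Z) 0 e) *: g j = 0.
  move: (freeg _ sum0 j0); rewrite inE j0T fj0M => /(_ isT) /eqP.
  by rewrite mulf_eq0 (negbTE dj0) (negbTE fj0Ze).
rewrite -[RHS]relT big_mkcond [RHS]big_mkcond; apply: eq_bigr => j _.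
rewrite inE; case: (j \in T) => //=; case: (boolP (f j <= M)%MS) => //= /fZ0 ->.
by rewrite mxE mulr0 scale0r.
Qed.

(* Take rho.+1 indices S0 and as many further indices T1 as the Kruskal rank of [f] allows:
   some [f j0], j0 in S0, escapes the span of [P] and the [f j], j in T1, while the indices
   outside T1 are few enough for [g] to be free on them. *)
Lemma kruskal_outer_sum rho (P : 'M_(rho, N1)) (Q : 'M_(rho, N2)) ka kb
    (d : 'I_r -> F) (T : {set 'I_r}) :
  kruskal_ge f ka -> kruskal_ge g kb -> (rho < ka)%N -> (rho < kb)%N ->
  (#|T| + rho < ka + kb)%N ->
  \sum_(j in T) d j *: ((f j)^T *m g j) = P^T *m Q ->
  (#|[set j in T | d j != 0%R]| <= rho)%N.
Proof.
move=> fka gkb rho_ka rho_kb T_small sum_eq; set S := [set j in T | d j != 0].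
have sST : S \subset T by apply/subsetP => j; rewrite inE => /andP[].
have {}sum_eq : \sum_(j in S) d j *: ((f j)^T *m g j) = P^T *m Q.
  rewrite -sum_eq [RHS](big_setID S) /= (setIidPr sST) [X in _ = _ + X]big1 ?addr0 // => j.
  by rewrite !inE andbC; case: (j \in T) => //= /negPn /eqP ->; rewrite scale0r.
rewrite leqNgt; apply/negP => rho_S.
have [S0 sS0S cardS0] := exists_subset_card rho_S.
have [T1 sT1 cardT1] : exists2 T1 : {set 'I_r},
    T1 \subset S :\: S0 & #|T1| = minn (ka - rho.+1) (#|S| - rho.+1).
  by apply: exists_subset_card; rewrite cardsD (setIidPr sS0S) cardS0 geq_minr.
have sT1S : T1 \subset S by apply: subset_trans sT1 (subsetDl _ _).
have disS0T1 : [disjoint S0 & T1].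
  by rewrite disjoint_sym disjoints_subset (subset_trans sT1) // setDE subsetIr.
have cardS0T1 : (#|S0 :|: T1| <= ka)%N by rewrite cardsU cardS0 cardT1; lia.
have [j0 j0S0 fj0M] := @free_on_not_sub _ _ _ f _ P S0 T1 (fka _ cardS0T1) disS0T1 cardS0.
have := subsetP sS0S _ j0S0; rewrite inE => /andP[j0T dj0].
apply: (outer_sum_not_free sum_eq (addsmxSl P _) (subsetP sS0S _ j0S0) dj0 fj0M).
apply: free_onS (gkb (S :\: T1) _).
  apply/subsetP => j; rewrite !inE => /andP[jS fjM]; rewrite jS andbT.
  by apply: contra fjM => /sub_adds_sumsmx.
have := subset_leq_card sST; rewrite cardsD (setIidPr sT1S) cardT1; lia.
Qed.

End OuterSum.

Section TensorRows.
Variables (F : fieldType) (m : nat) (n : 'I_m -> nat).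

Local Notation index := {dffun forall k : 'I_m, 'I_(n k)}.
Local Notation N := #|{: index}|.
Local Notation vectors := (forall k : 'I_m, 'rV[F]_(n k)).
Implicit Types (v w : vectors) (G : {set 'I_m}).

Definition tprod (w : vectors) (G : {set 'I_m}) (a : forall k, 'I_(n k)) : F :=
  \prod_(k in G) w k 0 (a k).

(* A tensor in F^(n 0) (x) ... (x) F^(n (m-1)) is a row vector indexed by the enumeration of
   [index]; [tprod_row G w] is the product of the [w k], k in G, as a tensor that is constant
   in the other coordinates. *)
Definition tprod_row (G : {set 'I_m}) (w : vectors) : 'rV[F]_N :=
  \row_(i < N) tprod w G (enum_val i).

Definition tprod_mx r (u : 'I_r -> vectors) : 'M[F]_(r, N) :=
  \matrix_j tprod_row setT (u j).

Definition mix (G : {set 'I_m}) (a b : index) : index :=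
  [ffun k => if k \in G then a k else b k].

Definition unfold_mx (G : {set 'I_m}) (x : 'rV[F]_N) : 'M[F]_N :=
  \matrix_(i < N, i' < N) x 0 (enum_rank (mix G (enum_val i) (enum_val i'))).

Lemma tprod_rowE G w (a : index) : tprod_row G w 0 (enum_rank a) = tprod w G a.
Proof. by rewrite mxE enum_rankK. Qed.

Lemma tprod_setU w (G1 G2 : {set 'I_m}) a : [disjoint G1 & G2] ->
  tprod w (G1 :|: G2) a = tprod w G1 a * tprod w G2 a.
Proof. by move=> disG; rewrite /tprod -bigU //; apply: eq_bigl => k; rewrite !inE. Qed.

Lemma tprod_mix_in w G (a b : index) : tprod w G (mix G a b) = tprod w G a.
Proof. by apply: eq_bigr => k kG; rewrite ffunE kG. Qed.

Lemma tprod_mix_out w (G G' : {set 'I_m}) (a b : index) : [disjoint G & G'] ->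
  tprod w G' (mix G a b) = tprod w G' b.
Proof.
by move=> disG; apply: eq_bigr => k kG'; rewrite ffunE (disjointFl disG kG').
Qed.

Lemma tprod_neq0 w G (a : forall k, 'I_(n k)) :
  (forall k, w k 0 (a k) != 0) -> tprod w G a != 0.
Proof. by move=> wa; apply/prodf_neq0 => k _. Qed.

Fact unfold_mx_is_linear G : linear (unfold_mx G).
Proof. by move=> c x y; apply/matrixP => i i'; rewrite !mxE. Qed.

HB.instance Definition _ G :=
  GRing.isLinear.Build F 'rV[F]_N 'M[F]_N _ (unfold_mx G) (unfold_mx_is_linear G).

Lemma unfold_tprod_row (G1 G2 : {set 'I_m}) w : [disjoint G1 & G2] ->
  unfold_mx G1 (tprod_row (G1 :|: G2) w) = (tprod_row G1 w)^T *m tprod_row G2 w.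
Proof.
move=> disG; apply/matrixP => i i'; rewrite !mxE big_ord1 !mxE enum_rankK.
by rewrite tprod_setU // tprod_mix_in tprod_mix_out.
Qed.

Lemma exists_update (a : index) k (i : 'I_(n k)) :
  exists b : index, b k = i /\ forall k', k' != k -> b k' = a k'.
Proof.
have coord k' : exists i' : 'I_(n k'), (k' = k -> i' = i :> nat) /\ (k' != k -> i' = a k').
  case: (eqVneq k' k) => [-> | neq_k'k]; first by exists i.
  by exists (a k'); split => // eq_k'k; rewrite eq_k'k eqxx in neq_k'k.
have [b bP] := fin_all_exists coord.
exists (finfun b); split => [|k' /(bP k').2]; rewrite ffunE //.
by apply: val_inj; apply: (bP k).1.
Qed.

Lemma exists_index_nonzero w :
  (forall k, w k != 0) -> exists a : index, forall k, w k 0 (a k) != 0.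
Proof.
move=> w_neq0; have coord k : exists i : 'I_(n k), w k 0 i != 0 by apply/rV0Pn.
by have [a aP] := fin_all_exists coord; exists (finfun a) => k; rewrite ffunE.
Qed.

Section KruskalTprod.
Variables (r : nat) (u : 'I_r -> vectors).

Lemma kruskal_ge_tprod_row1 (a0 : index) k K :
  kruskal_ge (fun j => u j k) K -> kruskal_ge (fun j => tprod_row [set k] (u j)) K.
Proof.
move=> uK T leTK d sum0; apply: (uK T leTK d); apply/rowP => i.
have [b [bk _]] := exists_update a0 i.
have := congr1 (fun x : 'rV[F]_N => x 0 (enum_rank b)) sum0.
rewrite !(summxE, mxE) => sumb0; rewrite -[RHS]sumb0.
by apply: eq_bigr => j _; rewrite !mxE enum_rankK /tprod big_set1 bk.
Qed.

Lemma kruskal_ge_tprod_row0 (a0 : index) : kruskal_ge (fun j => tprod_row set0 (u j)) 1.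
Proof.
move=> T leT1 d sum0 j jT.
have Tj : T = [set j] by apply/eqP; rewrite eq_sym eqEcard sub1set jT cards1 leT1.
move: sum0; rewrite Tj big_set1 => /(congr1 (fun x : 'rV[F]_N => x 0 (enum_rank a0))).
by rewrite mxE tprod_rowE /tprod big_set0 mulr1 mxE.
Qed.

Lemma kruskal_ge_tprod_rowU (G1 G2 : {set 'I_m}) ka kb : [disjoint G1 & G2] ->
  kruskal_ge (fun j => tprod_row G1 (u j)) ka ->
  kruskal_ge (fun j => tprod_row G2 (u j)) kb ->
  (0 < ka)%N -> (0 < kb)%N -> kruskal_ge (fun j => tprod_row (G1 :|: G2) (u j)) (ka + kb).-1.
Proof.
move=> disG uG1 uG2 ka_gt0 kb_gt0 T leT d sum0 j jT.
have outer0 : \sum_(j in T) d j *: ((tprod_row G1 (u j))^T *m tprod_row G2 (u j))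
    = (0 : 'M_(0, N))^T *m (0 : 'M_(0, N)).
  have := congr1 (unfold_mx G1) sum0; rewrite linear0 linear_sum => unfold0.
  rewrite trmx0 mul0mx -[RHS]unfold0.
  by apply: eq_bigr => i _; rewrite linearZ /= unfold_tprod_row.
have T_small : (#|T| + 0 < ka + kb)%N by lia.
have := kruskal_outer_sum uG1 uG2 ka_gt0 kb_gt0 T_small outer0.
rewrite leqn0 cards_eq0 => /eqP /setP /(_ j).
by rewrite !inE jT /= => /negbFE /eqP.
Qed.

Lemma kruskal_ge_tprod_row (a0 : index) (ku : 'I_m -> nat) :
  (forall k, kruskal_ge (fun j => u j k) (ku k)) -> (forall k, 0 < ku k)%N ->
  forall G, kruskal_ge (fun j => tprod_row G (u j)) (\sum_(k in G) (ku k).-1).+1.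
Proof.
move=> uku ku_gt0 G; have [t] := ubnP #|G|; elim: t G => // t IH G cardG.
have [-> | [k kG]] := set_0Vmem G.
  by rewrite big_set0; apply: kruskal_ge_tprod_row0.
have kGk : k \notin G :\ k by rewrite setD11.
have cardGk : (#|G :\ k| < t)%N by move: cardG; rewrite (cardsD1 k G) kG.
have disG : [disjoint [set k] & G :\ k] by rewrite disjoints1.
rewrite -(setD1K kG) big_setU1 //=.
apply: kruskal_geW (kruskal_ge_tprod_rowU disG (kruskal_ge_tprod_row1 a0 (uku k))
  (IH _ cardGk) (ku_gt0 k) (ltn0Sn _)).
set s := \sum_(i in G :\ k) _; have := ku_gt0 k; lia.
Qed.

Section KruskalCondition.
Hypothesis u_neq0 : forall j k, u j k != 0.
Hypothesis kruskal_cond : (r + m <= \sum_(k < m) kruskal_rank (fun j => u j k))%N.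
Let ku k := kruskal_rank (fun j => u j k).

Let u_kruskal k : kruskal_ge (fun j => u j k) (ku k).
Proof. exact: kruskal_ge_rank. Qed.

Let ku_gt0 : (0 < r)%N -> forall k, (0 < ku k)%N.
Proof. by move=> r_gt0 k; apply: kruskal_rank_gt0 r_gt0 (fun j => u_neq0 j k). Qed.

Lemma tprod_mx_row_free : row_free (tprod_mx u).
Proof.
apply: free_on_row_free.
have [r0 | r_gt0] := posnP r; first by move=> d _ j; have := ltn_ord j; rewrite {2}r0.
have [a0 _] := exists_index_nonzero (u_neq0 (Ordinal r_gt0)).
apply: (kruskal_ge_tprod_row a0 u_kruskal (ku_gt0 r_gt0)).
have sum_setT : \sum_(k in [set: 'I_m]) ku k = \sum_(k < m) ku k.
  by apply: eq_bigl => k; rewrite inE.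
move: kruskal_cond; rewrite -sum_setT (sum_predn _ (ku_gt0 r_gt0)) !cardsT !card_ord.
set S := \sum_(k in [set: 'I_m]) _; lia.
Qed.

(* The case rho = 1 of [kruskal_outer_sum], flattening along a factor [k0] with
   [1 < ku k0]. *)
Lemma tprod_row_span_support (w : vectors) (D : 'I_r -> F) :
  tprod_row setT w = \sum_j D j *: tprod_row setT (u j) ->
  (#|[set j | D j != 0%R]| <= 1)%N.
Proof.
move=> w_eq; have sum_ku : (r + m <= \sum_(k < m) ku k)%N := kruskal_cond.
have [r0 | r_gt0] := posnP r.
  by apply: leq_trans (max_card _) _; rewrite card_ord r0.
have [a0 _] := exists_index_nonzero (u_neq0 (Ordinal r_gt0)).
have [k0 ku_k0] : exists k0, (1 < ku k0)%N.
  case: (pickP (fun k => 1 < ku k)%N) => [k0 | small]; first by exists k0.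
  have : (\sum_(k < m) ku k <= \sum_(k < m) 1)%N.
    by apply: leq_sum => k _; rewrite leqNgt small.
  by rewrite sum1_card card_ord; lia.
set G := ~: [set k0].
have outer : \sum_(j in [set: 'I_r]) D j *: ((tprod_row [set k0] (u j))^T *m tprod_row G (u j))
    = (tprod_row [set k0] w)^T *m tprod_row G w.
  have disG : [disjoint [set k0] & G] by rewrite disjoints1 !inE eqxx.
  have := congr1 (unfold_mx [set k0]) w_eq; rewrite -(setUCr [set k0]) linear_sum.
  rewrite unfold_tprod_row // => ->; apply: eq_big => [j | j _]; first by rewrite inE.
  by rewrite linearZ /= unfold_tprod_row.
have sum_split : \sum_(k < m) ku k = (ku k0 + \sum_(k in G) ku k)%N.
  by rewrite (bigD1 k0) //=; congr (_ + _)%N; apply: eq_bigl => k; rewrite !inE.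
have ku_k0_le : (ku k0 <= r)%N := kruskal_rank_le _.
move: sum_ku; rewrite sum_split (sum_predn _ (ku_gt0 r_gt0)) cardsC1 card_ord.
set S := \sum_(k in G) (ku k).-1 => sum_ku; have := ltn_ord k0 => k0_lt_m.
have kb_gt1 : (1 < S.+1)%N by lia.
have card_cond : (#|[set: 'I_r]| + 1 < ku k0 + S.+1)%N by rewrite cardsT card_ord; lia.
have := kruskal_outer_sum (kruskal_ge_tprod_row1 a0 (@u_kruskal k0))
  (kruskal_ge_tprod_row a0 u_kruskal (ku_gt0 r_gt0) (G := G)) ku_k0 kb_gt1 card_cond outer.
by apply: leq_trans; apply: eq_leq; apply: eq_card => j; rewrite !inE.
Qed.

Lemma tprod_mx_sub_matching r' (w : 'I_r' -> vectors) :
  (0 < r)%N -> (tprod_mx w <= tprod_mx u)%MS ->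
  exists (sigma : 'I_r' -> 'I_r) (alpha : 'I_r' -> F),
    forall i, tprod_row setT (w i) = alpha i *: tprod_row setT (u (sigma i)).
Proof.
move=> r_gt0 sWU.
suff match_i i : exists p : 'I_r * F, tprod_row setT (w i) = p.2 *: tprod_row setT (u p.1).
  by have [p pP] := fin_all_exists match_i; exists (fst \o p), (snd \o p).
have /submxP [D wD] := submx_trans (row_sub i _) sWU.
have {}wD : tprod_row setT (w i) = \sum_j D 0 j *: tprod_row setT (u j).
  by move: wD; rewrite rowK mulmx_sum_row => ->; apply: eq_bigr => j _; rewrite rowK.
have /card_le1_eqP supp1 := tprod_row_span_support wD.
have [supp0 | [j jD]] := set_0Vmem [set j | D 0 j != 0].
  exists (Ordinal r_gt0, 0); rewrite wD scale0r big1 // => j _.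
  by move/setP: supp0 => /(_ j); rewrite !inE => /negbFE /eqP ->; rewrite scale0r.
exists (j, D 0 j); rewrite wD (bigD1 j) //= big1 ?addr0 // => j' neq_j'j.
have /eqP -> : D 0 j' == 0; last by rewrite scale0r.
by apply: contraNT neq_j'j => Dj'; rewrite (supp1 j' j) // inE.
Qed.

End KruskalCondition.

End KruskalTprod.

Lemma tprod_row_scaleE v w (c : F) : tprod_row setT w = c *: tprod_row setT v ->
  forall a : mindex n, tprod w setT a = c * tprod v setT a.
Proof.
move=> w_eq a; have tprod_ffun w' : tprod w' setT (finfun a : index) = tprod w' setT a.
  by apply: eq_bigr => k _; rewrite ffunE.
have := congr1 (fun x : 'rV[F]_N => x 0 (enum_rank (finfun a : index))) w_eq.
by rewrite !mxE !enum_rankK !tprod_ffun.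
Qed.

Lemma tprod_row_proportional v w (c : F) :
  tprod_row setT w = c *: tprod_row setT v -> c != 0 ->
  (forall k, v k != 0) -> forall k, exists ck : F, w k = ck *: v k.
Proof.
move=> /tprod_row_scaleE w_eq c_neq0 v_neq0 k.
have [a a_neq0] := exists_index_nonzero v_neq0.
set G := ~: [set k].
have split_k w' (b : mindex n) : tprod w' setT b = w' k 0 (b k) * tprod w' G b.
  rewrite -(setUCr [set k]) tprod_setU ?disjoints1 ?inE ?eqxx //.
  by rewrite /tprod big_set1.
have va_neq0 : tprod v G a != 0 by apply: tprod_neq0.
have wa_neq0 : tprod w G a != 0.
  apply/eqP => wa0; move: (w_eq a); rewrite !split_k wa0 mulr0 => /esym/eqP.
  by rewrite !mulf_eq0 (negbTE c_neq0) (negbTE (a_neq0 k)) (negbTE va_neq0).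
exists (c * tprod v G a / tprod w G a); apply/rowP => i; rewrite mxE.
have [b [bk b_out]] := exists_update a i.
have tprodG_b w' : tprod w' G b = tprod w' G a.
  by apply: eq_bigr => k'; rewrite !inE => /b_out ->.
have := w_eq b; rewrite !split_k !tprodG_b bk => eq_i.
by apply: (mulIf wa_neq0); rewrite eq_i; field.
Qed.

End TensorRows.

Lemma trmx_sandwich_inj (F : fieldType) r N (V W : 'M[F]_(r, N)) (A B : 'M[F]_r) :
  row_free V -> row_free W -> V^T *m A *m W = V^T *m B *m W -> A = B.
Proof.
move=> freeV freeW /(row_free_inj freeW) /(congr1 trmx); rewrite !trmx_mul !trmxK.
by move/(row_free_inj freeV)/(congr1 trmx); rewrite !trmxK.
Qed.

Section HermitianMatrix.
Variables (R : realType) (m : nat) (n : 'I_m -> nat).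
Local Notation C := R[i].
Local Notation N := #|{: {dffun forall k : 'I_m, 'I_(n k)}}|.

Definition hmx (H : htensor R n) : 'M[C]_N :=
  \matrix_(y < N, z < N) H (enum_val z) (enum_val y).

Definition real_diag r (lam : 'I_r -> R) : 'M[C]_r := diag_mx (\row_j (lam j)%:C).

Lemma hprod_tprod (w : vtuple R n) a b :
  hprod w a b = tprod w setT a * Num.conj (tprod w setT b).
Proof.
by rewrite /hprod /tprod rmorph_prod -big_split; apply: eq_bigl => k; rewrite inE.
Qed.

Lemma hmx_hsum r (lam : 'I_r -> R) (u : 'I_r -> vtuple R n) :
  hmx (hsum lam u) = (map_mx Num.conj (tprod_mx u))^T *m real_diag lam *m tprod_mx u.
Proof.
apply/matrixP => y z; rewrite mul_mx_diag !mxE; apply: eq_bigr => j _.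
by rewrite !mxE hprod_tprod; ring.
Qed.

Lemma hdecomp_rank_le (H : htensor R n) r : hdecomp H r -> (\rank (hmx H) <= r)%N.
Proof.
by case=> lam [u ->]; rewrite hmx_hsum; apply: leq_trans (mxrankM_maxr _ _) (rank_leq_row _).
Qed.

Lemma rank_hmx_hsum r (lam : 'I_r -> R) (u : 'I_r -> vtuple R n) :
  row_free (tprod_mx u) -> (forall j, lam j != 0) -> \rank (hmx (hsum lam u)) = r.
Proof.
move=> freeU lam_neq0; rewrite hmx_hsum mxrankMfree // -mxrank_tr trmx_mul trmxK tr_diag_mx.
rewrite mxrankMfree ?row_free_map // mxrank_unit // unitmxE det_diag unitfE.
by apply/prodf_neq0 => j _; rewrite mxE fmorph_eq0.
Qed.

Lemma hsum_eq_tprod_mx_sub r (lam mu : 'I_r -> R) (u w : 'I_r -> vtuple R n) :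
  row_free (tprod_mx u) -> (forall j, lam j != 0) -> hsum lam u = hsum mu w ->
  (tprod_mx w <= tprod_mx u)%MS.
Proof.
move=> freeU lam_neq0 eq_hsum; have rankH := rank_hmx_hsum freeU lam_neq0.
have sHW : (hmx (hsum lam u) <= tprod_mx w)%MS by rewrite eq_hsum hmx_hsum submxMl.
have sWH : (tprod_mx w <= hmx (hsum lam u))%MS.
  by rewrite -(mxrank_leqif_sup sHW).2 eqn_leq (mxrankS sHW) rankH rank_leq_row.
by apply: submx_trans sWH _; rewrite hmx_hsum submxMl.
Qed.

Lemma hsum_eq_coef r (lam mu : 'I_r -> R) (u w : 'I_r -> vtuple R n)
    (sigma : 'I_r -> 'I_r) (alpha : 'I_r -> C) :
  row_free (tprod_mx u) ->
  (forall i, tprod_row setT (w i) = alpha i *: tprod_row setT (u (sigma i))) ->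
  hsum lam u = hsum mu w ->
  forall j, (lam j)%:C = \sum_(i | sigma i == j) (mu i)%:C * (alpha i * Num.conj (alpha i)).
Proof.
move=> freeU w_eq eq_hsum j.
pose A : 'M[C]_r := \matrix_(i, j) (if sigma i == j then alpha i else 0).
have wA : tprod_mx w = A *m tprod_mx u.
  apply/matrixP => i z; rewrite !mxE (bigD1 (sigma i)) //= big1 ?addr0 => [|j' neq_j'].
    by rewrite !mxE eqxx (tprod_row_scaleE (w_eq i)).
  by rewrite !mxE eq_sym (negbTE neq_j') mul0r.
have freeUc : row_free (map_mx Num.conj (tprod_mx u)) by rewrite row_free_map.
have : real_diag lam = (map_mx Num.conj A)^T *m real_diag mu *m A.
  apply: (trmx_sandwich_inj freeUc freeU); rewrite !mulmxA.
  by have := congr1 hmx eq_hsum; rewrite !hmx_hsum wA map_mxM trmx_mul !mulmxA.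
move/(congr1 (fun M : 'M[C]_r => M j j)).
rewrite mul_mx_diag !mxE eqxx mulr1n => ->; rewrite [RHS]big_mkcond; apply: eq_bigr => i _.
rewrite !mxE; case: eqP => _; first by ring.
by rewrite rmorph0 !mul0r.
Qed.

Lemma hsum_essentially_unique r (lam mu : 'I_r -> R) (u w : 'I_r -> vtuple R n) :
  (forall j, lam j != 0) -> (forall j k, u j k != 0) ->
  (r + m <= \sum_(k < m) kruskal_rank (fun j => u j k))%N ->
  hsum lam u = hsum mu w ->
  exists s : {perm 'I_r}, forall j, exists alpha : C,
    [/\ alpha != 0, tprod_row setT (w (s j)) = alpha *: tprod_row setT (u j)
      & (lam j)%:C = (mu (s j))%:C * (alpha * Num.conj alpha)].
Proof.
move=> lam_neq0 u_neq0 kruskal_cond eq_hsum.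
have freeU := tprod_mx_row_free u_neq0 kruskal_cond.
have [r0 | r_gt0] := posnP r; first by exists 1%g => j; have := ltn_ord j; rewrite {2}r0.
have [sigma [alpha w_eq]] := tprod_mx_sub_matching u_neq0 kruskal_cond r_gt0
  (hsum_eq_tprod_mx_sub freeU lam_neq0 eq_hsum).
have coef := hsum_eq_coef freeU w_eq eq_hsum.
have sigma_onto j : exists i, sigma i = j.
  case: (pickP (fun i => sigma i == j)) => [i /eqP | none]; first by exists i.
  by move/eqP: (coef j); rewrite big_pred0 // fmorph_eq0 (negbTE (lam_neq0 j)).
have [g sigma_g] := fin_all_exists sigma_onto; set s := perm (can_inj sigma_g).
have sigmaE i : sigma i = (s^-1)%g i by rewrite -{1}(permKV s i) permE sigma_g.
exists s => j.
have coef_j : (lam j)%:C = (mu (s j))%:C * (alpha (s j) * Num.conj (alpha (s j))).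
  rewrite coef (big_pred1 (s j)) // => i /=; rewrite sigmaE.
  by apply/eqP/eqP => [<- | ->]; rewrite ?permKV ?permK.
exists (alpha (s j)); split => //; last by rewrite w_eq sigmaE permK.
apply/eqP => alpha0; move/eqP: coef_j.
by rewrite alpha0 mul0r mulr0 fmorph_eq0 (negbTE (lam_neq0 j)).
Qed.

End HermitianMatrix.

Theorem proposition2p5 (R : realType) (m : nat) (n : 'I_m -> nat) (r : nat)
    (lam : 'I_r -> R) (u : 'I_r -> vtuple R n) :
  (1 < m)%N ->
  (forall j, lam j != 0) ->
  (forall j k, u j k != 0) ->
  (r + m <= \sum_(k < m) kruskal_rank (fun j => u j k))%N ->
  hrank_is (hsum lam u) r /\
  (forall (mu : 'I_r -> R) (w : 'I_r -> vtuple R n),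
     hsum lam u = hsum mu w ->
     exists s : {perm 'I_r}, forall j,
       (forall a b, (mu (s j))%:C * hprod (w (s j)) a b = (lam j)%:C * hprod (u j) a b) /\
       (forall k, exists c : complex R, w (s j) k = c *: u j k)).
Proof.
(* The argument needs no lower bound on [m]. *)
move=> _ lam_neq0 u_neq0 kruskal_cond; split.
  split; first by exists lam, u.
  move=> r' /hdecomp_rank_le; rewrite rank_hmx_hsum //; exact: tprod_mx_row_free.
move=> mu w /(hsum_essentially_unique lam_neq0 u_neq0 kruskal_cond) [s sP].
exists s => j; have [alpha [alpha_neq0 w_eq lam_eq]] := sP j; split.
  by move=> a b; rewrite !hprod_tprod !(tprod_row_scaleE w_eq) lam_eq rmorphM /=; ring.
by move=> k; apply: tprod_row_proportional w_eq alpha_neq0 (u_neq0 j) k.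
Qed.
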